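(* Let $S^+=\{\overline{\jmath}_1,\dots,\overline{\jmath}_\nu\}$ be distinct positive integers, $S=S^+\cup(-S^+)$, $S^c=\mathbb{Z}\setminus(S\cup\{0\})$, and $\xi\in[1,2]^\nu$ (indexed by $S^+$, $\xi_{\overline{\jmath}_i}=\xi_i$). Define for $j\in S^c$ $$\mathfrak l_j:=\frac23\sum_{j_2\in S^+}\frac{(1+j_2^2)(1+j^2)(2+j_2^2+j^2)}{(3+j_2^2-j_2j+j^2)(3+j_2^2+j_2j+j^2)}\xi_{j_2},\qquad c:=\frac23\sum_{j\in S^+}(1+j^2)\xi_j,$$ and $\kappa_j:=\lambda(j)(\mathfrak l_j-c)$, where $\lambda(j)=j\frac{4+j^2}{1+j^2}$. Then there is a constant $C>0$ depending on the set $S$ such that $|j|\,|\kappa_j|\le C$ for all $j\in S^c$. *)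

From HB Require Import structures.
From mathcomp Require Import all_boot all_order all_algebra.
From mathcomp Require Import reals.
Set Implicit Arguments. Unset Strict Implicit. Unset Printing Implicit Defensive.
Import Order.TTheory GRing.Theory Num.Theory.
Local Open Scope ring_scope.

(* S^+ is given as a duplicate-free sequence sp of positive integers;
   xi is a function on integers, only its values on S^+ matter. *)

Definition in_Sc (sp : seq int) (j : int) : bool :=
  [&& j != 0, j \notin sp & - j \notin sp].

Definition lam {R : realType} (j : int) : R :=
  (j%:~R) * (4 + (j%:~R) ^+ 2) / (1 + (j%:~R) ^+ 2).

Definition frakl {R : realType} (sp : seq int) (xi : int -> R) (j : int) : R :=
  2 / 3 * \sum_(j2 <- sp)
    ((1 + (j2%:~R) ^+ 2) * (1 + (j%:~R) ^+ 2) * (2 + (j2%:~R) ^+ 2 + (j%:~R) ^+ 2)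
     / ((3 + (j2%:~R) ^+ 2 - (j2%:~R) * (j%:~R) + (j%:~R) ^+ 2)
        * (3 + (j2%:~R) ^+ 2 + (j2%:~R) * (j%:~R) + (j%:~R) ^+ 2)) * xi j2).

Definition cconst {R : realType} (sp : seq int) (xi : int -> R) : R :=
  2 / 3 * \sum_(j <- sp) (1 + (j%:~R) ^+ 2) * xi j.

Definition kappa {R : realType} (sp : seq int) (xi : int -> R) (j : int) : R :=
  lam j * (frakl sp xi j - cconst sp xi).

(* Put A = j2^2 and B = j^2.  The two denominator factors of the j2-th term
   of l_j multiply to D = 9 + A^2 + B^2 + 6A + 6B + AB, and that term minus
   the j2-th term of c equals -(1 + A) (7 + 5A + 3B + A^2) xi_{j2} / D.  Its
   numerator is linear in B while D is quadratic, so it decays like 1/j^2,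
   whereas |j lambda(j)| <= 4 j^2: each term of |j| |kappa_j| is bounded by a
   constant depending only on j2. *)

From HB Require Import structures.
From mathcomp Require Import all_boot all_order all_algebra.
From mathcomp Require Import reals.
From mathcomp Require Import ring lra.
Import Order.TTheory GRing.Theory Num.Theory.
Set Implicit Arguments. Unset Strict Implicit.
Local Open Scope ring_scope.

Section RealSymbols.

Variable R : realFieldType.
Implicit Types a x : R.

Definition lamr x : R := x * (4 + x ^+ 2) / (1 + x ^+ 2).

Definition lcoef a x : R :=
  (1 + a ^+ 2) * (1 + x ^+ 2) * (2 + a ^+ 2 + x ^+ 2)
  / ((3 + a ^+ 2 - a * x + x ^+ 2) * (3 + a ^+ 2 + a * x + x ^+ 2)).

Lemma norm_mul_lamr_le x : `|x| * `|lamr x| <= 4 * x ^+ 2.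
Proof.
have B0 : 0 <= x ^+ 2 := sqr_ge0 x.
rewrite -normrM.
have -> : x * lamr x = x ^+ 2 * ((4 + x ^+ 2) / (1 + x ^+ 2)).
  by rewrite /lamr !mulrA expr2.
rewrite ger0_norm; last by rewrite mulr_ge0 ?divr_ge0 //; lra.
rewrite [leRHS]mulrC ler_wpM2l // ler_pdivrMr; lra.
Qed.

Definition lnum (A B : R) : R := 7 + 5 * A + 3 * B + A ^+ 2.

Definition lden (A B : R) : R := 9 + A ^+ 2 + B ^+ 2 + 6 * A + 6 * B + A * B.

Lemma lden_gt0 (A B : R) : 0 <= A -> 0 <= B -> 0 < lden A B.
Proof. by rewrite /lden; nra. Qed.

Lemma lcoef_subE a x :
  lcoef a x - (1 + a ^+ 2) = - ((1 + a ^+ 2) * lnum (a ^+ 2) (x ^+ 2) / lden (a ^+ 2) (x ^+ 2)).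
Proof.
have subE (A B : R) : lden A B != 0 ->
    (1 + A) * (1 + B) * (2 + A + B) / lden A B - (1 + A) = - ((1 + A) * lnum A B / lden A B).
  by rewrite /lnum /lden => D_neq0; field.
rewrite /lcoef.
have -> : (3 + a ^+ 2 - a * x + x ^+ 2) * (3 + a ^+ 2 + a * x + x ^+ 2) = lden (a ^+ 2) (x ^+ 2).
  by rewrite /lden; ring.
by rewrite subE // gt_eqF // lden_gt0 ?sqr_ge0.
Qed.

Lemma mul_lnum_le (A B : R) : 0 <= A -> 0 <= B ->
  B * lnum A B <= (10 + 5 * A + A ^+ 2) * lden A B.
Proof.
move=> A0 B0; have AB0 := mulr_ge0 A0 B0; have AA0 := mulr_ge0 A0 A0.
have := mulr_ge0 AA0 AA0; have := mulr_ge0 AA0 A0; have := mulr_ge0 AB0 B0.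
have := mulr_ge0 AA0 B0; have := mulr_ge0 AB0 AB0; have := mulr_ge0 AA0 AB0.
by rewrite /lnum /lden; nra.
Qed.

Lemma sqr_mul_norm_lcoef_sub_le a x :
  x ^+ 2 * `|lcoef a x - (1 + a ^+ 2)| <= (1 + a ^+ 2) * (10 + 5 * a ^+ 2 + a ^+ 2 ^+ 2).
Proof.
set A := a ^+ 2; set B := x ^+ 2.
have A0 : 0 <= A := sqr_ge0 a.
have B0 : 0 <= B := sqr_ge0 x.
have D_gt0 := lden_gt0 A0 B0.
have N0 : 0 <= lnum A B by rewrite /lnum; nra.
rewrite lcoef_subE -/A -/B normrN ger0_norm; last first.
  by rewrite divr_ge0 ?(ltW D_gt0) // mulr_ge0 // addr_ge0.
rewrite -mulrA mulrCA ler_wpM2l ?addr_ge0 //.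
by rewrite mulrA ler_pdivrMr // mul_lnum_le.
Qed.

Lemma norm_lamr_lcoef_sub_le a x :
  `|x| * `|lamr x| * `|lcoef a x - (1 + a ^+ 2)|
    <= 4 * ((1 + a ^+ 2) * (10 + 5 * a ^+ 2 + a ^+ 2 ^+ 2)).
Proof.
apply: le_trans (ler_wpM2r (normr_ge0 _) (norm_mul_lamr_le x)) _.
by rewrite -mulrA ler_wpM2l ?sqr_mul_norm_lcoef_sub_le.
Qed.

Lemma ler_norm_sum_weighted (I : eqType) (s : seq I) (F w M : I -> R) (b : R) :
  (forall i, `|F i| <= M i) -> (forall i, i \in s -> `|w i| <= b) ->
  `|\sum_(i <- s) F i * w i| <= b * \sum_(i <- s) M i.
Proof.
move=> FM wb; apply: le_trans (ler_norm_sum _ _ _) _.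
rewrite mulr_sumr big_seq [leRHS]big_seq; apply: ler_sum => i si.
by rewrite normrM mulrC ler_pM ?wb.
Qed.

End RealSymbols.

Lemma kappaE (R : realType) (sp : seq int) (xi : int -> R) (j : int) :
  kappa sp xi j = lamr (j%:~R : R) *
    (2 / 3 * \sum_(a <- sp) (lcoef a%:~R j%:~R - (1 + a%:~R ^+ 2)) * xi a).
Proof.
rewrite /kappa /frakl /cconst -mulrBr -sumrB.
by congr (_ * (_ * _)); apply: eq_bigr => a _; rewrite mulrBl.
Qed.

Theorem lemma7p3 (R : realType) (sp : seq int) :
  uniq sp -> all (fun j => 0 < j) sp ->
  exists C : R, 0 < C /\
    forall (xi : int -> R),
      (forall j, j \in sp -> 1 <= xi j <= 2) ->
      forall j : int, in_Sc sp j ->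
        `|(j%:~R : R)| * `|kappa sp xi j| <= C.
Proof.
(* The bound holds for every integer j and every finite sequence sp. *)
move=> _ _.
pose K (a : int) : R := 4 * ((1 + a%:~R ^+ 2) * (10 + 5 * a%:~R ^+ 2 + a%:~R ^+ 2 ^+ 2)).
have K_ge0 a : 0 <= K a.
  by apply: le_trans (norm_lamr_lcoef_sub_le _ 0); rewrite !mulr_ge0.
have sumK_ge0 : 0 <= \sum_(a <- sp) K a by rewrite sumr_ge0.
exists (1 + 4 / 3 * \sum_(a <- sp) K a); split; first lra.
move=> xi xi12 j _; set x : R := j%:~R.
have xi_le2 a : a \in sp -> `|xi a| <= 2.
  by move=> /xi12 /andP[xi_ge1 xi_le2]; rewrite ger0_norm //; lra.
have term_le a : `|x * lamr x * (lcoef a%:~R x - (1 + a%:~R ^+ 2))| <= K a.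
  by rewrite 2!normrM; apply: norm_lamr_lcoef_sub_le.
have kappa_sum : x * kappa sp xi j
    = 2 / 3 * \sum_(a <- sp) (x * lamr x * (lcoef a%:~R x - (1 + a%:~R ^+ 2))) * xi a.
  rewrite kappaE mulrA mulrCA mulr_sumr; congr (_ * _).
  by apply: eq_bigr => a _; rewrite mulrA.
have := ler_norm_sum_weighted term_le xi_le2.
rewrite -normrM kappa_sum normrM [`|2 / 3|]ger0_norm; lra.
Qed.
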